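(* Let $J=JCK(Z,\delta)$ and $K=Z\oplus Zx$. Then: (i) every odd derivation of $J$ is inner, $\mathrm{Der}(J)_{\bar1}=\mathrm{Inder}(J)_{\bar1}$; (ii) the restriction map $\mathrm{Der}(J)^{[\bar0,\bar0]}\to\mathrm{Der}(K)$, $\partial\mapsto\partial|_K$, is injective with image $\overline{\mathrm{Der}}(K)$; (iii) $\dim_{\mathbb F}\mathrm{Der}(J)_{\bar1}=4\dim_{\mathbb F}Z=\dim_{\mathbb F}J_{\bar1}$ (dimensions as cardinals).
   Context: Let $\mathbb F$ be a field of characteristic $\neq 2$, $Z$ a unital commutative associative $\mathbb F$-algebra, and $\delta$ a derivation of $Z$ such that $Z\delta(Z)=Z$ (the $\mathbb F$-span of all products $f\delta(g)$, $f,g\in Z$, is $Z$). The Cheng-Kac Jordan superalgebra $J=JCK(Z,\delta)=J_{\bar0}\oplus J_{\bar1}$ is defined as follows: $J_{\bar0}=Z1\oplus Zw_1\oplus Zw_2\oplus Zw_3$ and $J_{\bar1}=Zx\oplus Zx_1\oplus Zx_2\oplus Zx_3$ are free $Z$-modules of rank 4; $J_{\bar0}$ is the $Z$-algebra $(\mathbb F1\oplus\mathbb Fw_1\oplus\mathbb Fw_2\oplus\mathbb Fw_3)\otimes_{\mathbb F}Z$ with $1$ the identity, $w_1^2=w_2^2=1$, $w_3^2=-1$, $w_iw_j=0$ for $i\ne j$. For $f,g\in Z$ and $i,j\in\{1,2,3\}$ the remaining products are: $f(gx)=(fg)x$, $f(gx_j)=(fg)x_j$, $(fw_i)(gx)=(\delta(f)g)x_i$,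 $(fw_i)(gx_j)=-(fg)x_{i\times j}$, $(fx)(gx)=\delta(f)g-f\delta(g)$, $(fx)(gx_j)=-(fg)w_j$, $(fx_i)(gx)=(fg)w_i$, $(fx_i)(gx_j)=0$, extended by supercommutativity ($ab=(-1)^{|a||b|}ba$), where $x_{1\times2}=-x_{2\times1}=x_3$, $x_{1\times3}=-x_{3\times1}=x_2$, $x_{3\times2}=-x_{2\times3}=x_1$, $x_{i\times i}=0$. $J$ is $\mathbb Z_2^2$-graded by $J^{[\bar0,\bar0]}=Z\oplus Zx$, $J^{[\bar1,\bar0]}=Zw_1\oplus Zx_1$, $J^{[\bar0,\bar1]}=Zw_2\oplus Zx_2$, $J^{[\bar1,\bar1]}=Zw_3\oplus Zx_3$, and $\mathrm{Der}(J)^{\alpha}$ denotes the derivations mapping each $J^{\beta}$ into $J^{\alpha+\beta}$. Derivations are super derivations; $D(a,b)$ is $c\mapsto a(bc)-(-1)^{|a||b|}b(ac)$ and $\mathrm{Inder}$ is the span of all $D(a,b)$. $K=Z\oplus Zx$ is a subalgebra of $J$. For $a\in Z$, $\eta_a$ is the odd derivation of $K$ with $\eta_a(Z)=0$, $\eta_a(x)=a$. $\overline{\mathrm{Der}}(K)$ denotes the subalgebra $\mathrm{Der}(K)_{\bar0}\oplus\{\eta_a:a\in Z\}$ of $\mathrm{Der}(K)$. *)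

From HB Require Import structures.
From mathcomp Require Import all_boot all_order all_algebra.
Set Implicit Arguments. Unset Strict Implicit. Unset Printing Implicit Defensive.
Import GRing.Theory.
Local Open Scope ring_scope.

(* Generic super-notions for an F-superalgebra whose carrier V is an   *)
(* F-vector space, with product [mul] and homogeneity predicate        *)
(* [par p v] ("v is homogeneous of parity p", p = false : even,        *)
(* p = true : odd).                                                     *)
Section Super.
Variables (F : fieldType) (V : lmodType F) (mul : V -> V -> V)
          (par : bool -> V -> Prop).

Definition flinear (D : V -> V) :=
  forall (c : F) (u v : V), D (c *: u + v) = c *: D u + D v.

Definition sder (p : bool) (D : V -> V) :=
  [/\ flinear D,
      (forall q u, par q u -> par (addb q p) (D u)) &
      (forall q a b, par q a ->
         D (mul a b) = mul (D a) b + ((-1) ^+ (p && q)) *: mul a (D b))].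

Definition der (D : V -> V) :=
  exists D0 D1, [/\ sder false D0, sder true D1 & forall u, D u = D0 u + D1 u].

Definition odd_der (D : V -> V) := sder true D.

Definition Dop (p : bool) (a : V) (q : bool) (b : V) (c : V) :=
  mul a (mul b c) - ((-1) ^+ (p && q)) *: mul b (mul a c).

Definition inder (D : V -> V) :=
  exists s : seq (F * (bool * V) * (bool * V)),
    (forall t, t \in s -> par t.1.2.1 t.1.2.2 /\ par t.2.1 t.2.2) /\
    forall c, D c = \sum_(t <- s) t.1.1 *: Dop t.1.2.1 t.1.2.2 t.2.1 t.2.2 c.

Definition odd_map (D : V -> V) := forall q u, par q u -> par (~~ q) (D u).

Definition odd_inder (D : V -> V) := inder D /\ odd_map D.

End Super.

(* An element  a0 1 + a1 w1 + a2 w2 + a3 w3 + b0 x + b1 x1 + b2 x2      *)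
(*   + b3 x3   is represented as ((a0,a1,a2,a3),(b0,b1,b2,b3)).         *)
Section ChengKac.
Variables (F : fieldType) (Z : comAlgType F) (delta : Z -> Z).

Definition JCK : lmodType F := ((Z * Z * Z * Z) * (Z * Z * Z * Z))%type.

Definition mkJ (a0 a1 a2 a3 b0 b1 b2 b3 : Z) : JCK :=
  ((a0, a1, a2, a3), (b0, b1, b2, b3)).

Definition je0 (u : JCK) : Z := u.1.1.1.1.
Definition je1 (u : JCK) : Z := u.1.1.1.2.
Definition je2 (u : JCK) : Z := u.1.1.2.
Definition je3 (u : JCK) : Z := u.1.2.
Definition jo0 (u : JCK) : Z := u.2.1.1.1.
Definition jo1 (u : JCK) : Z := u.2.1.1.2.
Definition jo2 (u : JCK) : Z := u.2.1.2.
Definition jo3 (u : JCK) : Z := u.2.2.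

(* The product, obtained by expanding bilinearly the multiplication table:
   w1^2 = w2^2 = 1, w3^2 = -1, wi wj = 0 (i<>j),
   (f wi)(g x) = (delta f g) xi, (f wi)(g xj) = -(fg) x_{i x j},
   (fx)(gx) = delta f g - f delta g, (fx)(g xj) = -(fg) wj,
   (f xi)(g x) = (fg) wi, (f xi)(g xj) = 0, super-commutativity,
   with x_{1x2} = x3 = -x_{2x1}, x_{1x3} = x2 = -x_{3x1},
   x_{3x2} = x1 = -x_{2x3}. *)
Definition mulJ (u v : JCK) : JCK :=
  let a0 := je0 u in let a1 := je1 u in let a2 := je2 u in let a3 := je3 u in
  let b0 := jo0 u in let b1 := jo1 u in let b2 := jo2 u in let b3 := jo3 u in
  let c0 := je0 v in let c1 := je1 v in let c2 := je2 v in let c3 := je3 v in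
  let d0 := jo0 v in let d1 := jo1 v in let d2 := jo2 v in let d3 := jo3 v in
  mkJ
    (a0 * c0 + a1 * c1 + a2 * c2 - a3 * c3 + delta b0 * d0 - b0 * delta d0)
    (a0 * c1 + a1 * c0 - b0 * d1 + b1 * d0)
    (a0 * c2 + a2 * c0 - b0 * d2 + b2 * d0)
    (a0 * c3 + a3 * c0 - b0 * d3 + b3 * d0)
    (a0 * d0 + c0 * b0)
    (a0 * d1 + c0 * b1 + delta a1 * d0 + delta c1 * b0
       + a2 * d3 - a3 * d2 + c2 * b3 - c3 * b2)
    (a0 * d2 + c0 * b2 + delta a2 * d0 + delta c2 * b0
       + a3 * d1 - a1 * d3 + c3 * b1 - c1 * b3)
    (a0 * d3 + c0 * b3 + delta a3 * d0 + delta c3 * b0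
       + a2 * d1 - a1 * d2 + c2 * b1 - c1 * b2).

Definition parJ (p : bool) (u : JCK) : Prop :=
  if p then u.1 = 0 else u.2 = 0.

(* Z_2^2-grading: component k (k = 0,1,2,3 for [0,0],[1,0],[0,1],[1,1])
   consists of the coefficients of w_k and x_k (w_0 = 1, x_0 = x) *)
Definition jcomp (k : nat) (u : JCK) : Z * Z :=
  match k with
  | 0 => (je0 u, jo0 u)
  | 1 => (je1 u, jo1 u)
  | 2 => (je2 u, jo2 u)
  | _ => (je3 u, jo3 u)
  end%N.

Definition inJdeg (k : nat) (u : JCK) : Prop :=
  forall l, (l < 4)%N -> l != k -> jcomp l u = 0.

Definition der00 (D : JCK -> JCK) : Prop :=
  der mulJ parJ D /\
  forall k u, (k < 4)%N -> inJdeg k u -> inJdeg k (D u).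

(* K = Z (+) Zx, an element f + g x represented as (f, g) *)
Definition KCK : lmodType F := (Z * Z)%type.

Definition mulK (u v : KCK) : KCK :=
  (u.1 * v.1 + delta u.2 * v.2 - u.2 * delta v.2, u.1 * v.2 + v.1 * u.2).

Definition parK (p : bool) (u : KCK) : Prop :=
  if p then u.1 = 0 else u.2 = 0.

Definition KtoJ (k : KCK) : JCK := mkJ k.1 0 0 0 k.2 0 0 0.
Definition restrK (D : JCK -> JCK) (k : KCK) : KCK :=
  (je0 (D (KtoJ k)), jo0 (D (KtoJ k))).

(* eta_a : the odd derivation of K with eta_a(Z) = 0, eta_a(x) = a,
   i.e. eta_a(f + g x) = g a *)
Definition etaK (a : Z) (k : KCK) : KCK := (k.2 * a, 0).

Definition derbarK (d : KCK -> KCK) : Prop :=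
  exists D0 a, sder mulK parK false D0 /\ forall k, d k = D0 k + etaK a k.

End ChengKac.

(* J is generated by Z 1, w1, w2, w3 and x: since Z delta(Z) = Z, every f x_i is a sum of
   products (g w_i)(h x).  A derivation is therefore determined by its values on these
   generators, and the relations w_i^2 = +-1, w_i w_j = 0, w_i x = 0 pin those values down.
   For an odd derivation only four coefficients q, p1, p2, p3 in Z remain free, giving the
   explicit family [Dodd q p1 p2 p3]; each member is D(a, x) + D(-w1, q x1) for a suitable
   even a, which proves (i), and the parameters form a copy of J_1, which proves (iii).
   An even derivation preserving the Z_2^2-grading acts as a derivation phi of Z on the
   coefficients and multiplies x by r and the x_i by -r, where [phi, delta] = 2 r delta
   ([Dev phi r]); its odd companion in Der(J)^[0,0] is [Dodd q 0 0 0].  The even derivations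
   of K are described by the same pairs (phi, r), and the restriction of
   [Dev phi r + Dodd q 0 0 0] to K is the derivation of K given by (phi, r) plus eta_(-q),
   which proves (ii). *)

From HB Require Import structures.
From mathcomp Require Import all_boot all_order all_algebra ring.
Import GRing.Theory.
Local Open Scope ring_scope.

Set Implicit Arguments.
Unset Strict Implicit.
Unset Printing Implicit Defensive.

Section ZDerivation.
Variables (F : fieldType) (Z : comAlgType F).

Definition zder (phi : Z -> Z) :=
  [/\ forall f g, phi (f + g) = phi f + phi g,
      forall (c : F) f, phi (c *: f) = c *: phi f
    & forall f g, phi (f * g) = phi f * g + f * phi g].

Variable phi : Z -> Z.
Hypothesis phi_der : zder phi.

Lemma zder0 : phi 0 = 0.
Proof. by case: phi_der => phiD _ _; apply: (@addrI _ (phi 0)); rewrite -phiD !addr0. Qed.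

Lemma zderN f : phi (- f) = - phi f.
Proof. by case: phi_der => _ phiZ _; rewrite -scaleN1r phiZ scaleN1r. Qed.

Lemma zder1 : phi 1 = 0.
Proof.
case: phi_der => _ _ phiM; apply: (@addrI _ (phi 1)).
by rewrite addr0 -{1}[phi 1]mulr1 -{2}[phi 1]mul1r -phiM mulr1.
Qed.

End ZDerivation.

Section ScalarAsProduct.
Variables (F : fieldType) (Z : comAlgType F).

(* [ring] does not know the action of F on Z: scalars become multiplication by [c%:A],
   kept folded in [scalZ] so that rewriting with [scaleZE] terminates. *)
Definition scalZ (c : F) : Z := c%:A.

Lemma scaleZE (c : F) (f : Z) : c *: f = scalZ c * f.
Proof. by rewrite mulr_algl. Qed.

End ScalarAsProduct.

Section SuperDerivation.
Variables (F : fieldType) (V : lmodType F) (mul : V -> V -> V)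
          (par : bool -> V -> Prop) (p : bool) (D : V -> V).
Hypothesis D_der : sder mul par p D.

Lemma sderD u v : D (u + v) = D u + D v.
Proof. by case: D_der => DZ _ _; rewrite -{1}[u]scale1r DZ scale1r. Qed.

Lemma sder0 : D 0 = 0.
Proof. by apply: (@addrI _ (D 0)); rewrite -sderD !addr0. Qed.

Lemma sderZ c u : D (c *: u) = c *: D u.
Proof. by case: D_der => DZ _ _; rewrite -[c *: u]addr0 DZ sder0 addr0. Qed.

Lemma sderN u : D (- u) = - D u.
Proof. by rewrite -scaleN1r sderZ scaleN1r. Qed.

Lemma sder_sum (I : Type) (s : seq I) (P : pred I) (G : I -> V) :
  D (\sum_(i <- s | P i) G i) = \sum_(i <- s | P i) D (G i).
Proof. exact: (big_morph D sderD sder0). Qed.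

Lemma sder_par q u : par q u -> par (addb q p) (D u).
Proof. by case: D_der => _ Dpar _; apply: Dpar. Qed.

Lemma sder_even a b : par false a -> D (mul a b) = mul (D a) b + mul a (D b).
Proof. by case: D_der => _ _ DM /DM ->; rewrite andbF expr0 scale1r. Qed.

End SuperDerivation.

Lemma even_sder_mul (F : fieldType) (V : lmodType F) mul par (D : V -> V) :
  sder mul par false D -> forall q a b, par q a -> D (mul a b) = mul (D a) b + mul a (D b).
Proof. by case=> _ _ DM q a b /DM ->; rewrite expr0 scale1r. Qed.

Lemma sder_eq (F : fieldType) (V : lmodType F) mul par p (D D' : V -> V) :
  D =1 D' -> sder mul par p D' -> sder mul par p D.
Proof.
move=> DD' [D'Z D'par D'M]; split.
- by move=> c u v; rewrite !DD' D'Z.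
- by move=> q u /D'par; rewrite DD'.
- by move=> q a b /D'M; rewrite !DD'.
Qed.

Section Jordan.
Variables (F : fieldType) (Z : comAlgType F) (delta : Z -> Z).
Hypothesis delta_add : forall f g : Z, delta (f + g) = delta f + delta g.
Hypothesis delta_scale : forall (c : F) (f : Z), delta (c *: f) = c *: delta f.
Hypothesis delta_mul : forall f g : Z, delta (f * g) = delta f * g + f * delta g.

Local Notation J := (JCK Z).
Local Notation "a ** b" := (mulJ delta a b) (at level 40, left associativity).

Definition jeven (a0 a1 a2 a3 : Z) : J := mkJ a0 a1 a2 a3 0 0 0 0.
Definition jodd (b0 b1 b2 b3 : Z) : J := mkJ 0 0 0 0 b0 b1 b2 b3.
Definition jz (f : Z) : J := mkJ f 0 0 0 0 0 0 0.
Definition jw1 : J := mkJ 0 1 0 0 0 0 0 0.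
Definition jw2 : J := mkJ 0 0 1 0 0 0 0 0.
Definition jw3 : J := mkJ 0 0 0 1 0 0 0 0.
Definition jx : J := mkJ 0 0 0 0 1 0 0 0.
Definition jx1 : J := mkJ 0 0 0 0 0 1 0 0.
Definition jx2 : J := mkJ 0 0 0 0 0 0 1 0.
Definition jx3 : J := mkJ 0 0 0 0 0 0 0 1.

Let delta_der : zder delta := And3 delta_add delta_scale delta_mul.
Let delta0 := zder0 delta_der.
Let deltaN := zderN delta_der.
Let delta1 := zder1 delta_der.

Ltac expand_delta :=
  repeat progress rewrite ?delta_add ?deltaN ?delta_mul ?delta_scale ?delta0 ?delta1.
(* Splitting pairs leaves equations whose type [ring] does not recognize as [Z]. *)
Let eqZ (f g : Z) : f = g -> f = g := id.
Ltac split_pairs := repeat (apply/pair_equal_spec; split); apply: eqZ.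
Ltac destructJ := repeat match goal with
  | |- forall _ : ?T, _ =>
      lazymatch T with context [JCK] => case=> [[[[? ?] ?] ?] [[[? ?] ?] ?]] end end.

Lemma J_addE : forall u v : J,
  u + v = mkJ (je0 u + je0 v) (je1 u + je1 v) (je2 u + je2 v) (je3 u + je3 v)
              (jo0 u + jo0 v) (jo1 u + jo1 v) (jo2 u + jo2 v) (jo3 u + jo3 v).
Proof. by destructJ. Qed.

Lemma J_oppE : forall u : J,
  - u = mkJ (- je0 u) (- je1 u) (- je2 u) (- je3 u)
            (- jo0 u) (- jo1 u) (- jo2 u) (- jo3 u).
Proof. by destructJ. Qed.

Lemma J_scaleE (c : F) : forall u : J,
  c *: u = mkJ (c *: je0 u) (c *: je1 u) (c *: je2 u) (c *: je3 u)
               (c *: jo0 u) (c *: jo1 u) (c *: jo2 u) (c *: jo3 u).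
Proof. by destructJ. Qed.

Lemma J_zeroE : 0 = mkJ 0 0 0 0 0 0 0 0 :> J.
Proof. by []. Qed.

Lemma mkJD (a0 a1 a2 a3 b0 b1 b2 b3 c0 c1 c2 c3 d0 d1 d2 d3 : Z) :
  mkJ a0 a1 a2 a3 b0 b1 b2 b3 + mkJ c0 c1 c2 c3 d0 d1 d2 d3
  = mkJ (a0 + c0) (a1 + c1) (a2 + c2) (a3 + c3) (b0 + d0) (b1 + d1) (b2 + d2) (b3 + d3).
Proof. by []. Qed.

Ltac unfold_J :=
  rewrite ?(J_zeroE, J_addE, J_oppE, J_scaleE);
  cbv beta iota zeta delta
    [mulJ mkJ jeven jodd jz jw1 jw2 jw3 jx jx1 jx2 jx3 je0 je1 je2 je3 jo0 jo1 jo2 jo3 fst snd].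

Ltac Jring :=
  unfold_J; split_pairs;
  expand_delta; rewrite ?scaleZE; ring.

Lemma mulJDl : forall u v w : J, (u + v) ** w = u ** w + v ** w.
Proof. destructJ; Jring. Qed.

Lemma mulJDr : forall u v w : J, u ** (v + w) = u ** v + u ** w.
Proof. destructJ; Jring. Qed.

Lemma mulJBl : forall u v w : J, (u - v) ** w = u ** w - v ** w.
Proof. destructJ; Jring. Qed.

Lemma mulJBr : forall u v w : J, u ** (v - w) = u ** v - u ** w.
Proof. destructJ; Jring. Qed.

Lemma mul0J : forall u : J, 0 ** u = 0.
Proof. destructJ; Jring. Qed.

Lemma mulJ0 : forall u : J, u ** 0 = 0.
Proof. destructJ; Jring. Qed.

Lemma mul1J : forall u : J, jz 1 ** u = u.
Proof. destructJ; Jring. Qed.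

Lemma jzD f g : jz (f + g) = jz f + jz g.
Proof. Jring. Qed.

Lemma jz_even f : parJ false (jz f).
Proof. by []. Qed.

Lemma parJ_even (u : J) : parJ false u -> u = jeven (je0 u) (je1 u) (je2 u) (je3 u).
Proof. by move: u; destructJ; rewrite /parJ /= => -[-> -> -> ->]. Qed.

Lemma parJ_odd (u : J) : parJ true u -> u = jodd (jo0 u) (jo1 u) (jo2 u) (jo3 u).
Proof. by move: u; destructJ; rewrite /parJ /= => -[-> -> -> ->]. Qed.

Lemma parJ0 p : parJ p (0 : J).
Proof. by case: p. Qed.

Lemma parJD p (u v : J) : parJ p u -> parJ p v -> parJ p (u + v).
Proof. by case: p; rewrite /parJ /= => -> ->; rewrite addr0. Qed.

Lemma parJZ p c (u : J) : parJ p u -> parJ p (c *: u).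
Proof. by case: p; rewrite /parJ /= => ->; rewrite scaler0. Qed.

Lemma parJN p (u : J) : parJ p u -> parJ p (- u).
Proof. by case: p; rewrite /parJ /= => ->; rewrite oppr0. Qed.

Lemma parJ_both (u : J) : parJ true u -> parJ false u -> u = 0.
Proof. by case: u => ? ?; rewrite /parJ /= => -> ->. Qed.

Lemma parJM p q (u v : J) : parJ p u -> parJ q v -> parJ (addb p q) (u ** v).
Proof.
case: p => [/parJ_odd|/parJ_even] ->; case: q => [/parJ_odd|/parJ_even] ->;
  rewrite /parJ /=; Jring.
Qed.

Lemma mulJ_evenC (a u : J) : parJ false a -> a ** u = u ** a.
Proof. by move/parJ_even ->; move: u; destructJ; Jring. Qed.

Hypothesis char_neq2 : (2%:R : F) != 0.
Hypothesis ZdeltaZ : forall z : Z, exists s : seq (Z * Z), z = \sum_(p <- s) p.1 * delta p.2.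

Lemma double_eq0 (V : lmodType F) (v : V) : v + v = 0 -> v = 0.
Proof.
move=> vv0; have : (2%:R : F) *: v = 0 by rewrite scaler_nat mulr2n.
by move/eqP; rewrite scaler_eq0 (negbTE char_neq2) => /eqP.
Qed.

Lemma delta_faithful (y : Z) : (forall g, delta g * y = 0) -> y = 0.
Proof.
move=> dy0; have [s s1] := ZdeltaZ 1.
rewrite -[y]mul1r s1 big_distrl big1 // => -[f g] _ /=.
by rewrite -mulrA dy0 mulr0.
Qed.

Lemma sder_jz1 p D : sder (mulJ delta) (@parJ F Z) p D -> D (jz 1) = 0.
Proof.
move=> Dder; have := sder_even Dder (jz 1) (jz_even 1).
rewrite -(mulJ_evenC (D (jz 1)) (jz_even 1)) !mul1J => DD.
by apply: (@addrI _ (D (jz 1))); rewrite addr0 -DD.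
Qed.

Lemma sder_sq0 p D a : sder (mulJ delta) (@parJ F Z) p D -> parJ false a ->
  D (a ** a) = 0 -> a ** D a = 0.
Proof.
move=> Dder a0; rewrite (sder_even Dder) // -(mulJ_evenC (D a) a0).
exact: double_eq0.
Qed.

Lemma sder_sub p D1 D2 : sder (mulJ delta) (@parJ F Z) p D1 ->
  sder (mulJ delta) (@parJ F Z) p D2 ->
  sder (mulJ delta) (@parJ F Z) p (fun u => D1 u - D2 u).
Proof.
move=> [D1Z D1par D1M] [D2Z D2par D2M]; split.
- by move=> c u v; rewrite D1Z D2Z scalerBr opprD addrACA.
- by move=> q u pu; apply: parJD (D1par _ _ pu) (parJN (D2par _ _ pu)).
- move=> q a b pa; rewrite (D1M q) // (D2M q) // mulJBl mulJBr scalerBr.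
  by rewrite opprD addrACA.
Qed.

Lemma jx1_product (f g : Z) : jz (f * delta g) ** jx1 = (jz g ** jw1) ** (jz f ** jx).
Proof. Jring. Qed.

Lemma jx2_product (f g : Z) : jz (f * delta g) ** jx2 = (jz g ** jw2) ** (jz f ** jx).
Proof. Jring. Qed.

Lemma jx3_product (f g : Z) : jz (f * delta g) ** jx3 = (jz g ** jw3) ** (jz f ** jx).
Proof. Jring. Qed.

Lemma jz_mul (f : Z) : forall v : J,
  jz f ** v = mkJ (f * je0 v) (f * je1 v) (f * je2 v) (f * je3 v)
                  (f * jo0 v) (f * jo1 v) (f * jo2 v) (f * jo3 v).
Proof. destructJ; Jring. Qed.

Lemma J_decomp (u : J) :
  u = jz (je0 u) + jz (je1 u) ** jw1 + jz (je2 u) ** jw2 + jz (je3 u) ** jw3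
    + jz (jo0 u) ** jx + jz (jo1 u) ** jx1 + jz (jo2 u) ** jx2
    + jz (jo3 u) ** jx3.
Proof.
(* [J_addE] duplicates its arguments, which is exponential on this 8-term sum. *)
rewrite !jz_mul /jz !mkJD; move: u; destructJ.
by cbv beta iota zeta delta
    [mkJ je0 je1 je2 je3 jo0 jo1 jo2 jo3 jw1 jw2 jw3 jx jx1 jx2 jx3 fst snd]; split_pairs; ring.
Qed.

Lemma sder_vanish p D : sder (mulJ delta) (@parJ F Z) p D ->
  (forall f, D (jz f) = 0) -> D jw1 = 0 -> D jw2 = 0 -> D jw3 = 0 -> D jx = 0 ->
  D =1 (fun _ => 0).
Proof.
move=> Dder Djz Dw1 Dw2 Dw3 Dx.
have Dprod a b : parJ false a -> D a = 0 -> D b = 0 -> D (a ** b) = 0.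
  by move=> a0 Da Db; rewrite (sder_even Dder) // Da Db mul0J mulJ0 addr0.
have Djz_mul f a : D a = 0 -> D (jz f ** a) = 0 by apply: Dprod.
have Dxi w xi : parJ false w -> D w = 0 ->
    (forall f g, jz (f * delta g) ** xi = (jz g ** w) ** (jz f ** jx)) ->
    forall h, D (jz h ** xi) = 0.
  move=> w0 Dw wx h; have [s ->] := ZdeltaZ h.
  have jzxD f g : jz (f + g) ** xi = jz f ** xi + jz g ** xi by rewrite jzD mulJDl.
  have jzx0 : jz 0 ** xi = 0 by rewrite -[jz 0]/(0 : J) mul0J.
  rewrite (big_morph (fun f => jz f ** xi) jzxD jzx0) (sder_sum Dder).
  rewrite big1 // => -[f g] _; rewrite wx Dprod ?Djz_mul //.
  exact: (parJM (jz_even g) w0).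
have Dx1 := Dxi jw1 jx1 erefl Dw1 (jx1_product).
have Dx2 := Dxi jw2 jx2 erefl Dw2 (jx2_product).
have Dx3 := Dxi jw3 jx3 erefl Dw3 (jx3_product).
move=> u; rewrite (J_decomp u) !(sderD Dder) Dx1 Dx2 Dx3 Djz !Djz_mul //.
by rewrite !addr0.
Qed.

Lemma sder_gen_ext p D1 D2 : sder (mulJ delta) (@parJ F Z) p D1 ->
  sder (mulJ delta) (@parJ F Z) p D2 ->
  (forall f, D1 (jz f) = D2 (jz f)) -> D1 jw1 = D2 jw1 -> D1 jw2 = D2 jw2 ->
  D1 jw3 = D2 jw3 -> D1 jx = D2 jx -> D1 =1 D2.
Proof.
move=> D1der D2der Ejz Ew1 Ew2 Ew3 Ex u; apply/eqP; rewrite -subr_eq0; apply/eqP.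
by apply: (sder_vanish (sder_sub D1der D2der)) => [f||||]; apply/eqP; rewrite subr_eq0;
  apply/eqP.
Qed.

Lemma jeven_eq0 a0 a1 a2 a3 :
  jeven a0 a1 a2 a3 = 0 -> [/\ a0 = 0, a1 = 0, a2 = 0 & a3 = 0].
Proof. by case. Qed.

Lemma jodd_eq0 b0 b1 b2 b3 :
  jodd b0 b1 b2 b3 = 0 -> [/\ b0 = 0, b1 = 0, b2 = 0 & b3 = 0].
Proof. by case. Qed.

Lemma jw1_mul_even a0 a1 a2 a3 : jw1 ** jeven a0 a1 a2 a3 = jeven a1 a0 0 0.
Proof. Jring. Qed.
Lemma jw2_mul_even a0 a1 a2 a3 : jw2 ** jeven a0 a1 a2 a3 = jeven a2 0 a0 0.
Proof. Jring. Qed.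
Lemma jw3_mul_even a0 a1 a2 a3 : jw3 ** jeven a0 a1 a2 a3 = jeven (- a3) 0 0 a0.
Proof. Jring. Qed.
Lemma jw1_mul_odd b0 b1 b2 b3 : jw1 ** jodd b0 b1 b2 b3 = jodd 0 0 (- b3) (- b2).
Proof. Jring. Qed.
Lemma jw2_mul_odd b0 b1 b2 b3 : jw2 ** jodd b0 b1 b2 b3 = jodd 0 b3 0 b1.
Proof. Jring. Qed.
Lemma jw3_mul_odd b0 b1 b2 b3 : jw3 ** jodd b0 b1 b2 b3 = jodd 0 (- b2) b1 0.
Proof. Jring. Qed.
Lemma odd_mul_jx b0 b1 b2 b3 : jodd b0 b1 b2 b3 ** jx = jeven (delta b0) b1 b2 b3.
Proof. Jring. Qed.

Lemma jw1_mul_jw1 : jw1 ** jw1 = jz 1.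
Proof. Jring. Qed.
Lemma jw2_mul_jw2 : jw2 ** jw2 = jz 1.
Proof. Jring. Qed.
Lemma jw3_mul_jw3 : jw3 ** jw3 = - jz 1.
Proof. Jring. Qed.
Lemma jw1_mul_jw2 : jw1 ** jw2 = 0.
Proof. Jring. Qed.
Lemma jw1_mul_jw3 : jw1 ** jw3 = 0.
Proof. Jring. Qed.

Lemma jw1_mul_x b : jw1 ** jodd b 0 0 0 = 0.
Proof. Jring. Qed.
Lemma jw2_mul_x b : jw2 ** jodd b 0 0 0 = 0.
Proof. Jring. Qed.
Lemma jw3_mul_x b : jw3 ** jodd b 0 0 0 = 0.
Proof. Jring. Qed.
Lemma x_mul_jw1 b : jodd b 0 0 0 ** jw1 = 0.
Proof. Jring. Qed.

Lemma jz_mul_jx g : jz g ** jx = jodd g 0 0 0.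
Proof. Jring. Qed.
Lemma jz_mul_jz_jw1 f g : jz f ** (jz g ** jw1) = jz (f * g) ** jw1.
Proof. Jring. Qed.
Lemma x_mul_jz_jw1 b g : jodd b 0 0 0 ** (jz g ** jw1) = jodd 0 (delta g * b) 0 0.
Proof. Jring. Qed.

Lemma opp_eq0 (V : zmodType) (v : V) : - v = 0 -> v = 0.
Proof. by move/eqP; rewrite oppr_eq0 => /eqP. Qed.

Lemma jw1_mul_odd_eq0 b0 b1 b2 b3 : jw1 ** jodd b0 b1 b2 b3 = 0 -> b2 = 0 /\ b3 = 0.
Proof. by rewrite jw1_mul_odd => /jodd_eq0 [_ _ /opp_eq0 -> /opp_eq0 ->]. Qed.
Lemma jw2_mul_odd_eq0 b0 b1 b2 b3 : jw2 ** jodd b0 b1 b2 b3 = 0 -> b1 = 0 /\ b3 = 0.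
Proof. by rewrite jw2_mul_odd => /jodd_eq0 [_ -> _ ->]. Qed.
Lemma jw3_mul_odd_eq0 b0 b1 b2 b3 : jw3 ** jodd b0 b1 b2 b3 = 0 -> b1 = 0 /\ b2 = 0.
Proof. by rewrite jw3_mul_odd => /jodd_eq0 [_ /opp_eq0 -> -> _]. Qed.

Lemma even_eq0_of_jw_mul c : parJ false c -> jw1 ** c = 0 -> jw2 ** c = 0 -> jw3 ** c = 0 -> c = 0.
Proof.
move/parJ_even ->; rewrite jw1_mul_even jw2_mul_even jw3_mul_even.
by case/jeven_eq0 => -> -> _ _ /jeven_eq0 [-> _ _ _] /jeven_eq0 [/opp_eq0 -> _ _ _].
Qed.

Lemma sder_mul_ann p D a b : sder (mulJ delta) (@parJ F Z) p D ->
  a ** b = 0 -> parJ false a -> D a = 0 -> a ** D b = 0.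
Proof.
move=> Dder ab0 pa Da; have := sder_even Dder b pa.
by rewrite ab0 (sder0 Dder) Da mul0J add0r => <-.
Qed.

Section OddVanishing.
Variable D : J -> J.
Hypothesis Dder : sder (mulJ delta) (@parJ F Z) true D.

Let Dform u : parJ false u -> D u = jodd (jo0 (D u)) (jo1 (D u)) (jo2 (D u)) (jo3 (D u)).
Proof. by move=> pu; apply: parJ_odd (sder_par Dder pu). Qed.

Lemma odd_der_jw0 : jo0 (D jw1) = 0 -> jo1 (D jw1) = 0 -> jo0 (D jw2) = 0 ->
  jo0 (D jw3) = 0 -> [/\ D jw1 = 0, D jw2 = 0 & D jw3 = 0].
Proof.
move=> y0 y1 z0 t0; have D1 := sder_jz1 Dder.
have Dw1 : D jw1 = 0.
  move: (sder_sq0 Dder (erefl : parJ false jw1)).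
  rewrite jw1_mul_jw1 D1 (Dform (erefl : parJ false jw1)) y0 y1.
  by move=> /(_ erefl) /jw1_mul_odd_eq0 [-> ->].
split=> //.
- move: (sder_sq0 Dder (erefl : parJ false jw2)) (sder_mul_ann Dder jw1_mul_jw2 erefl Dw1).
  rewrite jw2_mul_jw2 D1 (Dform (erefl : parJ false jw2)) z0.
  by move=> /(_ erefl) /jw2_mul_odd_eq0 [-> ->] /jw1_mul_odd_eq0 [-> _].
- move: (sder_sq0 Dder (erefl : parJ false jw3)) (sder_mul_ann Dder jw1_mul_jw3 erefl Dw1).
  rewrite jw3_mul_jw3 (sderN Dder) D1 oppr0 (Dform (erefl : parJ false jw3)) t0.
  by move=> /(_ erefl) /jw3_mul_odd_eq0 [-> ->] /jw1_mul_odd_eq0 [_ ->].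
Qed.

Hypotheses (Dw1 : D jw1 = 0) (Dw2 : D jw2 = 0) (Dw3 : D jw3 = 0).

Lemma odd_der_jx0 : D jx = 0.
Proof.
apply: even_eq0_of_jw_mul (sder_par Dder (_ : parJ true jx)) _ _ _ => //.
- exact: sder_mul_ann Dder (jw1_mul_x 1) erefl Dw1.
- exact: sder_mul_ann Dder (jw2_mul_x 1) erefl Dw2.
- exact: sder_mul_ann Dder (jw3_mul_x 1) erefl Dw3.
Qed.

Lemma odd_der_jz_x g : D (jz g) = jodd (jo0 (D (jz g))) 0 0 0.
Proof.
have a_odd : parJ true (D (jz g)) := sder_par Dder (jz_even g).
have Dgx : D (jz g ** jx) = D (jz g) ** jx.
  by rewrite (sder_even Dder) // odd_der_jx0 mulJ0 addr0.
have : D (jz g) ** jx = 0.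
  apply: even_eq0_of_jw_mul; first exact: (parJM a_odd (_ : parJ true jx)).
  - by rewrite -Dgx jz_mul_jx; exact: sder_mul_ann Dder (jw1_mul_x g) erefl Dw1.
  - by rewrite -Dgx jz_mul_jx; exact: sder_mul_ann Dder (jw2_mul_x g) erefl Dw2.
  - by rewrite -Dgx jz_mul_jx; exact: sder_mul_ann Dder (jw3_mul_x g) erefl Dw3.
rewrite {1}(parJ_odd a_odd) odd_mul_jx => /jeven_eq0 [_ g1 g2 g3].
by rewrite {1}(parJ_odd a_odd) g1 g2 g3.
Qed.

Lemma odd_der_jz0 f : D (jz f) = 0.
Proof.
have Djz_w1 g : D (jz g ** jw1) = 0.
  by rewrite (sder_even Dder) // odd_der_jz_x Dw1 mulJ0 addr0 x_mul_jw1.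
rewrite odd_der_jz_x (delta_faithful (y := jo0 (D (jz f)))) // => g.
have := sder_even Dder (jz g ** jw1) (jz_even f).
rewrite jz_mul_jz_jw1 !Djz_w1 mulJ0 addr0 odd_der_jz_x x_mul_jz_jw1.
by case/esym/jodd_eq0.
Qed.

End OddVanishing.

Lemma odd_der_vanish D : sder (mulJ delta) (@parJ F Z) true D ->
  jo0 (D jw1) = 0 -> jo1 (D jw1) = 0 -> jo0 (D jw2) = 0 -> jo0 (D jw3) = 0 ->
  D =1 (fun _ => 0).
Proof.
move=> Dder y0 y1 z0 t0; have [Dw1 Dw2 Dw3] := odd_der_jw0 Dder y0 y1 z0 t0.
exact: sder_vanish Dder (odd_der_jz0 Dder Dw1 Dw2 Dw3) Dw1 Dw2 Dw3 (odd_der_jx0 Dder Dw1 Dw2 Dw3).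
Qed.

Definition Dodd (q p1 p2 p3 : Z) (u : J) : J :=
  let a0 := je0 u in let a1 := je1 u in let a2 := je2 u in let a3 := je3 u in
  let b0 := jo0 u in let b1 := jo1 u in let b2 := jo2 u in let b3 := jo3 u in
  mkJ (- b0 * q + b1 * p1 + b2 * p2 + b3 * p3)
      (p1 * delta b0 - b0 * delta p1 - b3 * p2 - b2 * p3)
      (p2 * delta b0 - b0 * delta p2 + b1 * p3 + b3 * p1)
      (- p3 * delta b0 + b0 * delta p3 - b1 * p2 + b2 * p1)
      (a1 * p1 + a2 * p2 + a3 * p3)
      (p1 * delta a0 + a1 * q - p2 * delta a3 - p3 * delta a2)
      (p2 * delta a0 + a2 * q + p3 * delta a1 + p1 * delta a3)
      (- p3 * delta a0 + a3 * q - p2 * delta a1 + p1 * delta a2).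

Lemma Dodd_sder q p1 p2 p3 : sder (mulJ delta) (@parJ F Z) true (Dodd q p1 p2 p3).
Proof.
split.
- by move=> c; destructJ; rewrite /Dodd; Jring.
- by move=> [] u; [move/parJ_odd ->|move/parJ_even ->]; rewrite /parJ /Dodd; Jring.
- move=> [] a b; [move/parJ_odd ->|move/parJ_even ->];
    rewrite /= ?expr1 ?expr0 ?scaleN1r ?scale1r; move: b; destructJ; rewrite /Dodd; Jring.
Qed.

Lemma Dodd_jw1 q p1 p2 p3 : Dodd q p1 p2 p3 jw1 = jodd p1 q 0 0.
Proof. rewrite /Dodd; Jring. Qed.
Lemma Dodd_jw2 q p1 p2 p3 : Dodd q p1 p2 p3 jw2 = jodd p2 0 q 0.
Proof. rewrite /Dodd; Jring. Qed.
Lemma Dodd_jw3 q p1 p2 p3 : Dodd q p1 p2 p3 jw3 = jodd p3 0 0 q.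
Proof. rewrite /Dodd; Jring. Qed.

Lemma jo0B : forall u v : J, jo0 (u - v) = jo0 u - jo0 v.
Proof. by destructJ. Qed.
Lemma jo1B : forall u v : J, jo1 (u - v) = jo1 u - jo1 v.
Proof. by destructJ. Qed.

Lemma odd_der_Dodd D : sder (mulJ delta) (@parJ F Z) true D ->
  D =1 Dodd (jo1 (D jw1)) (jo0 (D jw1)) (jo0 (D jw2)) (jo0 (D jw3)).
Proof.
move=> Dder u; apply/eqP; rewrite -subr_eq0; apply/eqP; move: u.
apply: odd_der_vanish (sder_sub Dder (Dodd_sder _ _ _ _)) _ _ _ _;
  by rewrite ?Dodd_jw1 ?Dodd_jw2 ?Dodd_jw3 ?jo0B ?jo1B subrr.
Qed.

Lemma DoddD (c : F) q p1 p2 p3 q' p1' p2' p3' u :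
  c *: Dodd q p1 p2 p3 u + Dodd q' p1' p2' p3' u =
  Dodd (c *: q + q') (c *: p1 + p1') (c *: p2 + p2') (c *: p3 + p3') u.
Proof. by move: u; destructJ; rewrite /Dodd; Jring. Qed.

Lemma Dodd0 u : Dodd 0 0 0 0 u = 0.
Proof. by move: u; destructJ; rewrite /Dodd; Jring. Qed.

Local Notation Dop := (Dop (mulJ delta)).

Lemma J_even_odd : forall u : J,
  u = jeven (je0 u) (je1 u) (je2 u) (je3 u) + jodd (jo0 u) (jo1 u) (jo2 u) (jo3 u).
Proof. destructJ; Jring. Qed.

Lemma Dop_even_odd a0 a1 a2 a3 b0 b1 b2 b3 :
  Dop false (jeven a0 a1 a2 a3) true (jodd b0 b1 b2 b3) =1
  Dodd (- delta a0 * b0 - a1 * b1 - a2 * b2 + a3 * b3) (- a1 * b0) (- a2 * b0) (a3 * b0).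
Proof. move=> c; rewrite /Dop expr0 scale1r; move: c; destructJ; rewrite /Dodd; Jring. Qed.

Lemma Dop_odd_even a0 a1 a2 a3 b0 b1 b2 b3 :
  Dop true (jodd b0 b1 b2 b3) false (jeven a0 a1 a2 a3) =1
  Dodd (delta a0 * b0 + a1 * b1 + a2 * b2 - a3 * b3) (a1 * b0) (a2 * b0) (- a3 * b0).
Proof. move=> c; rewrite /Dop expr0 scale1r; move: c; destructJ; rewrite /Dodd; Jring. Qed.

Lemma Dop_mixed p a p' b : p != p' -> parJ p a -> parJ p' b ->
  exists q p1 p2 p3, Dop p a p' b =1 Dodd q p1 p2 p3.
Proof.
case: p; case: p' => // _.
- by move=> /parJ_odd -> /parJ_even ->; do 4 eexists; apply: Dop_odd_even.
- by move=> /parJ_even -> /parJ_odd ->; do 4 eexists; apply: Dop_even_odd.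
Qed.

Lemma Dodd_inner q p1 p2 p3 c :
  Dodd q p1 p2 p3 c = Dop false (jeven 0 (- p1) (- p2) p3) true (jodd 1 0 0 0) c
                    + Dop false (jeven 0 (- 1) 0 0) true (jodd 0 q 0 0) c.
Proof.
rewrite !Dop_even_odd -[X in X + _]scale1r DoddD !scale1r.
by congr Dodd; apply: eqZ; expand_delta; ring.
Qed.

Lemma Dop_additive p a q b : forall u v,
  Dop p a q b (u + v) = Dop p a q b u + Dop p a q b v.
Proof. by move=> u v; rewrite /Dop !mulJDr scalerDr opprD addrACA. Qed.

Lemma Dop_par p a b r c : parJ p a -> parJ p b -> parJ r c -> parJ r (Dop p a p b c).
Proof.
move=> pa pb pc; have e : r = addb p (addb p r) by rewrite addbA addbb.
rewrite /Dop; apply: parJD; last apply/parJN/parJZ;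
  rewrite {1}e; apply: parJM => //; exact: parJM.
Qed.

Definition parity_preserving (E : J -> J) :=
  (forall u v, E (u + v) = E u + E v) /\ (forall r u, parJ r u -> parJ r (E u)).

Lemma inder_decomp (s : seq (F * (bool * J) * (bool * J))) :
  (forall t, t \in s -> parJ t.1.2.1 t.1.2.2 /\ parJ t.2.1 t.2.2) ->
  exists E q p1 p2 p3, parity_preserving E /\
    forall c, \sum_(t <- s) t.1.1 *: Dop t.1.2.1 t.1.2.2 t.2.1 t.2.2 c =
              E c + Dodd q p1 p2 p3 c.
Proof.
elim: s => [|t s IH] hs.
  exists (fun _ => 0), 0, 0, 0, 0; split.
    by split=> [u v|r u _]; [rewrite addr0 | exact: parJ0].
  by move=> c; rewrite big_nil Dodd0 addr0.
have hs' : forall t', t' \in s -> parJ t'.1.2.1 t'.1.2.2 /\ parJ t'.2.1 t'.2.2.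
  by move=> t' t's; apply: hs; rewrite inE t's orbT.
have [E [q [p1 [p2 [p3 [[Eadd Epar] Esum]]]]]] := IH hs'.
move: (hs t (mem_head t s)); clear hs; case: t => [[k [p a]] [p' b]] /= [pa pb].
have [pp'|pp'] := eqVneq p p'; first subst p'.
  exists (fun c => k *: Dop p a p b c + E c), q, p1, p2, p3; split.
    split=> [u v|r u pu]; first by rewrite Dop_additive Eadd scalerDr addrACA.
    exact: parJD (parJZ _ (Dop_par pa pb pu)) (Epar _ _ pu).
  by move=> c; rewrite big_cons /= Esum addrA.
have [q0 [p10 [p20 [p30 Dmix]]]] := Dop_mixed pp' pa pb.
exists E, (k *: q0 + q), (k *: p10 + p1), (k *: p20 + p2), (k *: p30 + p3); split=> //.
by move=> c; rewrite big_cons /= Esum Dmix addrCA DoddD.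
Qed.

Lemma odd_inder_Dodd D : odd_inder (mulJ delta) (@parJ F Z) D ->
  exists q p1 p2 p3, D =1 Dodd q p1 p2 p3.
Proof.
(* The equal-parity part E = D - Dodd preserves parity, while D and [Dodd] reverse it. *)
case=> -[s [homog Dsum]] Dodd_map.
have [E [q [p1 [p2 [p3 [[Eadd Epar] Esum]]]]]] := inder_decomp homog.
exists q, p1, p2, p3.
have ED c : E c = D c - Dodd q p1 p2 p3 c by rewrite Dsum Esum addrK.
have E_homog0 r c : parJ r c -> E c = 0.
  move=> pc; have Eflip : parJ (~~ r) (E c).
    rewrite ED; apply: parJD (Dodd_map _ _ pc) (parJN _).
    by rewrite -addbT; move: (sder_par (Dodd_sder q p1 p2 p3) pc).
  by case: r pc Eflip => pc Eflip; apply: parJ_both => //; exact: Epar _ _ pc.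
move=> c; rewrite Dsum Esum (J_even_odd c) Eadd (E_homog0 false) // (E_homog0 true) //.
by rewrite !add0r -J_even_odd.
Qed.

Definition admissible (phi : Z -> Z) (r : Z) :=
  zder phi /\ forall f, phi (delta f) = delta (phi f) + (r + r) * delta f.

Definition Dev (phi : Z -> Z) (r : Z) (u : J) : J :=
  mkJ (phi (je0 u)) (phi (je1 u)) (phi (je2 u)) (phi (je3 u))
      (phi (jo0 u) + jo0 u * r) (phi (jo1 u) - jo1 u * r)
      (phi (jo2 u) - jo2 u * r) (phi (jo3 u) - jo3 u * r).

Local Notation K := (KCK Z).
Local Notation "a *k b" := (mulK delta a b) (at level 40, left associativity).

Lemma K_addE (k k' : K) : k + k' = (k.1 + k'.1, k.2 + k'.2).
Proof. by []. Qed.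
Lemma K_scaleE (c : F) (k : K) : c *: k = (c *: k.1, c *: k.2).
Proof. by []. Qed.

Ltac Kring := rewrite /mulK ?K_addE ?K_scaleE /=; congr pair; apply: eqZ; expand_delta; ring.

Section EvenDerivations.
Variables (phi : Z -> Z) (r : Z).
Hypothesis phi_adm : admissible phi r.

Let phi_add : forall f g, phi (f + g) = phi f + phi g.
Proof. by case: phi_adm => -[]. Qed.
Let phi_scale : forall (c : F) f, phi (c *: f) = c *: phi f.
Proof. by case: phi_adm => -[]. Qed.
Let phi_mul : forall f g, phi (f * g) = phi f * g + f * phi g.
Proof. by case: phi_adm => -[]. Qed.
Let phi_delta : forall f, phi (delta f) = delta (phi f) + (r + r) * delta f.
Proof. by case: phi_adm. Qed.
Let phi0 := zder0 phi_adm.1.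
Let phiN := zderN phi_adm.1.
Let phi1 := zder1 phi_adm.1.

Ltac expand_phi :=
  repeat progress rewrite ?phi_add ?phiN ?phi_mul ?phi_scale ?phi_delta ?phi0 ?phi1.

Lemma Dev_sder : sder (mulJ delta) (@parJ F Z) false (Dev phi r).
Proof.
split.
- by move=> c; destructJ; rewrite /Dev; unfold_J; split_pairs; expand_phi; expand_delta;
    rewrite ?scaleZE; ring.
- by move=> [] u; [move/parJ_odd ->|move/parJ_even ->]; rewrite /parJ /Dev; unfold_J;
    split_pairs; expand_phi; ring.
- move=> q a b _; rewrite expr0 scale1r; move: a b; destructJ; rewrite /Dev; unfold_J;
    split_pairs; expand_delta; expand_phi; expand_delta; ring.
Qed.

Definition DevK (k : KCK Z) : KCK Z := (phi k.1, phi k.2 + k.2 * r).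

Lemma DevK_sder : sder (mulK delta) (@parK F Z) false DevK.
Proof.
split.
- move=> c [f g] [f' g']; rewrite /DevK !K_addE !K_scaleE /=.
  by apply/pair_equal_spec; split; apply: eqZ; expand_phi; rewrite ?scaleZE; ring.
- by move=> [] [f g]; rewrite /parK /DevK /= => ->; rewrite ?phi0 ?mul0r ?addr0.
- move=> q [f g] [f' g'] _; rewrite expr0 scale1r /DevK /mulK K_addE /=.
  by apply/pair_equal_spec; split; apply: eqZ; expand_delta; expand_phi; expand_delta; ring.
Qed.

End EvenDerivations.

Lemma jz_inj f g : jz f = jz g -> f = g.
Proof. by case. Qed.
Lemma jzZ (c : F) f : jz (c *: f) = c *: jz f.
Proof. Jring. Qed.
Lemma jz_mul_jz f g : jz f ** jz g = jz (f * g).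
Proof. Jring. Qed.
Lemma jz_mul_x f b : jz f ** jodd b 0 0 0 = jodd (f * b) 0 0 0.
Proof. Jring. Qed.
Lemma x_mul_x b c : jodd b 0 0 0 ** jodd c 0 0 0 = jz (delta b * c - b * delta c).
Proof. Jring. Qed.

Lemma even_der_admissible D phi r : sder (mulJ delta) (@parJ F Z) false D ->
  (forall f, D (jz f) = jz (phi f)) -> D jx = jodd r 0 0 0 -> admissible phi r.
Proof.
move=> Dder Djz Dx; have Dmul := even_sder_mul Dder.
have phi_add f g : phi (f + g) = phi f + phi g.
  by apply: jz_inj; rewrite jzD -!Djz jzD (sderD Dder).
have phi_scale c f : phi (c *: f) = c *: phi f.
  by apply: jz_inj; rewrite jzZ -!Djz jzZ (sderZ Dder).
have phi_mul f g : phi (f * g) = phi f * g + f * phi g.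
  by apply: jz_inj; rewrite -Djz -jz_mul_jz (Dmul false) // !Djz !jz_mul_jz -jzD.
have phi_der : zder phi by [].
split=> // f.
have Dxf : D (jodd f 0 0 0) = jodd (phi f + f * r) 0 0 0.
  by rewrite -jz_mul_jx (Dmul false) // Djz Dx jz_mul_jx jz_mul_x; Jring.
have := Dmul true jx (jodd f 0 0 0) erefl.
rewrite (x_mul_x 1) Djz Dxf Dx !x_mul_x -jzD => /jz_inj.
rewrite delta1 mul0r mul1r sub0r (zderN phi_der) => /(congr1 (fun z => - z)).
by rewrite opprK => ->; expand_delta; ring.
Qed.

Lemma even_der_Dev D phi r : sder (mulJ delta) (@parJ F Z) false D -> admissible phi r ->
  (forall f, D (jz f) = jz (phi f)) -> D jx = jodd r 0 0 0 ->
  D jw1 = jeven 0 (je1 (D jw1)) 0 0 -> D jw2 = jeven 0 0 (je2 (D jw2)) 0 ->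
  D jw3 = jeven 0 0 0 (je3 (D jw3)) -> D =1 Dev phi r.
Proof.
move=> Dder adm Djz Dx Dw1 Dw2 Dw3.
have [phi0 phi1] := (zder0 adm.1, zder1 adm.1).
have D1 : D (jz 1) = 0 by rewrite Djz phi1.
have Dw1_0 : D jw1 = 0.
  move: (sder_sq0 Dder (erefl : parJ false jw1)); rewrite jw1_mul_jw1 D1 Dw1 jw1_mul_even.
  by move=> /(_ erefl) /jeven_eq0 [-> _ _ _].
have Dw2_0 : D jw2 = 0.
  move: (sder_sq0 Dder (erefl : parJ false jw2)); rewrite jw2_mul_jw2 D1 Dw2 jw2_mul_even.
  by move=> /(_ erefl) /jeven_eq0 [-> _ _ _].
have Dw3_0 : D jw3 = 0.
  move: (sder_sq0 Dder (erefl : parJ false jw3)); rewrite jw3_mul_jw3 (sderN Dder) D1 oppr0.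
  by rewrite Dw3 jw3_mul_even => /(_ erefl) /jeven_eq0 [/opp_eq0 -> _ _ _].
apply: sder_gen_ext Dder (Dev_sder adm) _ _ _ _ _.
- by move=> f; rewrite Djz /Dev; unfold_J; split_pairs; rewrite ?phi0; ring.
- by rewrite Dw1_0 /Dev; unfold_J; split_pairs; rewrite ?phi0 ?phi1; ring.
- by rewrite Dw2_0 /Dev; unfold_J; split_pairs; rewrite ?phi0 ?phi1; ring.
- by rewrite Dw3_0 /Dev; unfold_J; split_pairs; rewrite ?phi0 ?phi1; ring.
- by rewrite Dx /Dev; unfold_J; split_pairs; rewrite ?phi0 ?phi1; ring.
Qed.

(* Preservation of the Z_2^2-grading on parity-homogeneous elements only: this is what the
   even and odd parts of a graded derivation inherit ([der_graded_parts]). *)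
Definition graded_homog (D : J -> J) :=
  forall k p u, (k < 4)%N -> parJ p u -> inJdeg k u -> inJdeg k (D u).

Lemma pair_eq0 (a b : Z) : (a, b) = 0 -> a = 0 /\ b = 0.
Proof. by case. Qed.

Lemma deg0_even u : parJ false u -> inJdeg 0 u -> u = jz (je0 u).
Proof.
move=> pu deg; rewrite {1}(parJ_even pu).
case/pair_eq0: (deg 1%N isT isT) => -> _; case/pair_eq0: (deg 2%N isT isT) => -> _.
by case/pair_eq0: (deg 3%N isT isT) => -> _.
Qed.

Lemma deg0_odd u : parJ true u -> inJdeg 0 u -> u = jodd (jo0 u) 0 0 0.
Proof.
move=> pu deg; rewrite {1}(parJ_odd pu).
case/pair_eq0: (deg 1%N isT isT) => _ ->; case/pair_eq0: (deg 2%N isT isT) => _ ->.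
by case/pair_eq0: (deg 3%N isT isT) => _ ->.
Qed.

Lemma deg1_even u : parJ false u -> inJdeg 1 u -> u = jeven 0 (je1 u) 0 0.
Proof.
move=> pu deg; rewrite {1}(parJ_even pu).
case/pair_eq0: (deg 0%N isT isT) => -> _; case/pair_eq0: (deg 2%N isT isT) => -> _.
by case/pair_eq0: (deg 3%N isT isT) => -> _.
Qed.

Lemma deg2_even u : parJ false u -> inJdeg 2 u -> u = jeven 0 0 (je2 u) 0.
Proof.
move=> pu deg; rewrite {1}(parJ_even pu).
case/pair_eq0: (deg 0%N isT isT) => -> _; case/pair_eq0: (deg 1%N isT isT) => -> _.
by case/pair_eq0: (deg 3%N isT isT) => -> _.
Qed.

Lemma deg3_even u : parJ false u -> inJdeg 3 u -> u = jeven 0 0 0 (je3 u).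
Proof.
move=> pu deg; rewrite {1}(parJ_even pu).
case/pair_eq0: (deg 0%N isT isT) => -> _; case/pair_eq0: (deg 1%N isT isT) => -> _.
by case/pair_eq0: (deg 2%N isT isT) => -> _.
Qed.

Lemma even_graded_Dev D : sder (mulJ delta) (@parJ F Z) false D -> graded_homog D ->
  let phi f := je0 (D (jz f)) in let r := jo0 (D jx) in
  admissible phi r /\ D =1 Dev phi r.
Proof.
move=> Dder Dgr phi r.
have Dpar p u : parJ p u -> parJ p (D u) by move/(sder_par Dder); rewrite addbF.
have Djz f : D (jz f) = jz (phi f).
  by apply: deg0_even (Dpar _ _ (jz_even f)) (Dgr 0%N _ _ isT (jz_even f) _) => -[|[|[|[|]]]].
have Dx : D jx = jodd r 0 0 0.
  by apply: deg0_odd (Dpar true jx erefl) (Dgr 0%N true jx isT erefl _) => -[|[|[|[|]]]].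
have adm := even_der_admissible Dder Djz Dx.
split=> //; apply: even_der_Dev Dder adm Djz Dx _ _ _.
- by apply: deg1_even (Dpar false jw1 erefl) (Dgr 1%N false jw1 isT erefl _) => -[|[|[|[|]]]].
- by apply: deg2_even (Dpar false jw2 erefl) (Dgr 2%N false jw2 isT erefl _) => -[|[|[|[|]]]].
- by apply: deg3_even (Dpar false jw3 erefl) (Dgr 3%N false jw3 isT erefl _) => -[|[|[|[|]]]].
Qed.

Lemma jcomp_parts l (x y : J) : parJ false x -> parJ true y ->
  jcomp l (x + y) = 0 -> jcomp l x = 0 /\ jcomp l y = 0.
Proof.
move=> /parJ_even -> /parJ_odd ->; rewrite J_addE.
by case: l => [|[|[|l]]];
  cbv beta iota zeta delta [jcomp jeven jodd mkJ je0 je1 je2 je3 jo0 jo1 jo2 jo3 fst snd];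
  rewrite addr0 add0r => /pair_eq0 [-> ->].
Qed.

Lemma der_graded_parts D0 D1 :
  sder (mulJ delta) (@parJ F Z) false D0 -> sder (mulJ delta) (@parJ F Z) true D1 ->
  (forall k u, (k < 4)%N -> inJdeg k u -> inJdeg k (D0 u + D1 u)) ->
  graded_homog D0 /\ graded_homog D1.
Proof.
move=> D0der D1der Dgr.
suff parts k p u : (k < 4)%N -> parJ p u -> inJdeg k u -> inJdeg k (D0 u) /\ inJdeg k (D1 u).
  by split=> k p u k4 pu du; have [] := parts k p u k4 pu du.
move=> k4 pu du; have deg := Dgr k u k4 du.
have p0 := sder_par D0der pu; have p1 := sder_par D1der pu.
case: p pu p0 p1 => pu /= p0 p1.
- rewrite addrC in deg; split=> l l4 lk; have [] := jcomp_parts p1 p0 (deg l l4 lk) => //.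
- by split=> l l4 lk; have [] := jcomp_parts p0 p1 (deg l l4 lk).
Qed.

Lemma der00_Dev_Dodd D : der00 delta D ->
  exists phi r q, admissible phi r /\ D =1 (fun u => Dev phi r u + Dodd q 0 0 0 u).
Proof.
case=> -[D0 [D1 [D0der D1der DD]]] Dgr.
have [gr0 gr1] : graded_homog D0 /\ graded_homog D1.
  by apply: der_graded_parts => // k u k4 du; rewrite -DD; apply: Dgr.
have [adm D0E] := even_graded_Dev D0der gr0.
have D1w k w : (k < 4)%N -> (0 < k)%N -> parJ false w -> inJdeg k w -> jo0 (D1 w) = 0.
  by move=> k4 k0 pw dw; case/pair_eq0: (gr1 k false w k4 pw dw 0%N isT (negbT (ltn_eqF k0))) => _.
exists (fun f => je0 (D0 (jz f))), (jo0 (D0 jx)), (jo1 (D1 jw1)); split=> // u.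
rewrite DD D0E (odd_der_Dodd D1der) (D1w 1%N jw1) ?(D1w 2%N jw2) ?(D1w 3%N jw3) //.
all: by case=> [|[|[|[|]]]].
Qed.

Lemma evenK_DevK d : sder (mulK delta) (@parK F Z) false d ->
  exists phi r, admissible phi r /\ d =1 DevK phi r.
Proof.
move=> dder; have dmul := even_sder_mul dder.
pose phi f := (d (f, 0)).1; pose r := (d (0, 1)).2.
have dZ f : d (f, 0) = (phi f, 0).
  move: (sder_par dder (erefl : parK false ((f, 0) : K))).
  by rewrite /phi; case: (d _) => ? ? /= ->.
have dx : d (0, 1) = (0, r).
  move: (sder_par dder (erefl : parK true ((0, 1) : K))).
  by rewrite /r; case: (d _) => ? ? /= ->.
have dZx g : d (0, g) = (0, phi g + g * r).
  have -> : ((0, g) : K) = (g, 0) *k (0, 1) by Kring.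
  by rewrite (dmul false) // dZ dx; Kring.
have dE : d =1 DevK phi r.
  move=> [f g]; have -> : ((f, g) : K) = (f, 0) + (0, g) by rewrite K_addE /= addr0 add0r.
  by rewrite (sderD dder) dZ dZx K_addE /DevK /= !addr0 !add0r.
have phi_add f g : phi (f + g) = phi f + phi g.
  by have := sderD dder (f, 0) (g, 0); rewrite K_addE /= addr0 !dZ K_addE /= => -[-> _].
have phi_scale (c : F) f : phi (c *: f) = c *: phi f.
  by have := sderZ dder c (f, 0); rewrite K_scaleE /= scaler0 !dZ K_scaleE /= => -[-> _].
have phi_mul f g : phi (f * g) = phi f * g + f * phi g.
  have e : ((f * g, 0) : K) = (f, 0) *k (g, 0) by Kring.
  have := dmul false (f, 0) (g, 0) erefl; rewrite -e !dZ => /(congr1 fst).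
  by rewrite /mulK K_addE /= => ->; apply: eqZ; expand_delta; ring.
exists phi, r; split=> //; split=> // f.
have := dmul true (0, 1) (0, f) erefl; rewrite dx dZx /mulK /=.
have -> : (0 * 0 + delta 1 * f - 1 * delta f, 0 * f + 0 * 1) = (- delta f, 0) :> K.
  by congr pair; apply: eqZ; expand_delta; ring.
rewrite dZ => -[]; rewrite -/phi (zderN (And3 phi_add phi_scale phi_mul)).
move=> /(congr1 (fun z => - z)); rewrite opprK => -> _; apply: eqZ; expand_delta; ring.
Qed.

Lemma restrK_Dev_Dodd phi r q :
  restrK (fun u => Dev phi r u + Dodd q 0 0 0 u) =1 (fun k => DevK phi r k + etaK (- q) k).
Proof.
move=> [f g]; rewrite /restrK /KtoJ /Dev /Dodd /DevK /etaK K_addE /=; unfold_J.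
by congr pair; apply: eqZ; expand_delta; ring.
Qed.

Lemma Dev_Dodd_graded phi r q : admissible phi r ->
  forall k u, (k < 4)%N -> inJdeg k u -> inJdeg k (Dev phi r u + Dodd q 0 0 0 u).
Proof.
move=> [phi_der _] k u _ du l l4 lk; move: (du l l4 lk); move: u {du}; destructJ.
case: l l4 {lk} => [|[|[|[|l]]]] // _;
  cbv beta iota zeta delta [jcomp je0 je1 je2 je3 jo0 jo1 jo2 jo3 fst snd];
  move=> /pair_eq0 [-> ->]; rewrite /Dev /Dodd; unfold_J; rewrite (zder0 phi_der);
  split_pairs; expand_delta; ring.
Qed.

Lemma Dev_Dodd_der00 phi r q : admissible phi r ->
  der00 delta (fun u => Dev phi r u + Dodd q 0 0 0 u).
Proof.
move=> adm; split; last exact: Dev_Dodd_graded.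
by exists (Dev phi r), (Dodd q 0 0 0); split=> //; [apply: Dev_sder | apply: Dodd_sder].
Qed.

Lemma restrK_eq (D D' : J -> J) : D =1 D' -> restrK D =1 restrK D'.
Proof. by move=> DD' k; rewrite /restrK DD'. Qed.

Lemma restrK_der00_inj D1 D2 : der00 delta D1 -> der00 delta D2 ->
  restrK D1 =1 restrK D2 -> D1 =1 D2.
Proof.
move=> /der00_Dev_Dodd [phi1 [r1 [q1 [adm1 E1]]]] /der00_Dev_Dodd [phi2 [r2 [q2 [adm2 E2]]]] R.
have R' k : DevK phi1 r1 k + etaK (- q1) k = DevK phi2 r2 k + etaK (- q2) k.
  by rewrite -!restrK_Dev_Dodd -(restrK_eq E1) -(restrK_eq E2) R.
have [[phi10 phi11] [phi20 phi21]] := (zder0 adm1.1, zder1 adm1.1, (zder0 adm2.1, zder1 adm2.1)).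
have ephi f : phi1 f = phi2 f.
  by have := R' (f, 0); rewrite /DevK /etaK K_addE /= !mul0r !addr0 => -[].
have := R' (0, 1); rewrite /DevK /etaK K_addE /= phi10 phi11 phi20 phi21 !mul1r !addr0 !add0r.
move=> -[eqN er] u; have eq : q1 = q2 by apply: oppr_inj; rewrite eqN; apply: eqZ; ring.
have {}er : r1 = r2 by rewrite er; apply: eqZ; ring.
rewrite E1 E2 eq er /Dev.
by rewrite !ephi.
Qed.

Lemma restrK_der00_derbar D : der00 delta D -> derbarK delta (restrK D).
Proof.
move=> /der00_Dev_Dodd [phi [r [q [adm E]]]]; exists (DevK phi r), (- q).
by split=> [|k]; [apply: DevK_sder | rewrite (restrK_eq E) restrK_Dev_Dodd].
Qed.

Lemma derbar_restrK d : derbarK delta d -> exists D, der00 delta D /\ restrK D =1 d.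
Proof.
move=> [D0 [a [D0der dE]]]; have [phi [r [adm D0E]]] := evenK_DevK D0der.
exists (fun u => Dev phi r u + Dodd (- a) 0 0 0 u); split; first exact: Dev_Dodd_der00.
by move=> k; rewrite restrK_Dev_Dodd opprK dE D0E.
Qed.

Lemma odd_der_iff_inner D :
  odd_der (mulJ delta) (@parJ F Z) D <-> odd_inder (mulJ delta) (@parJ F Z) D.
Proof.
split=> [Dder|/odd_inder_Dodd [q [p1 [p2 [p3 DE]]]]]; last exact: sder_eq DE (Dodd_sder _ _ _ _).
split; last by move=> q u /(sder_par Dder); rewrite addbT.
have DE := odd_der_Dodd Dder.
set q := jo1 _ in DE; set p1 := jo0 (D jw1) in DE; set p2 := jo0 _ in DE; set p3 := jo0 _ in DE.
exists [:: (1, (false, jeven 0 (- p1) (- p2) p3), (true, jodd 1 0 0 0));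
           (1, (false, jeven 0 (- 1) 0 0), (true, jodd 0 q 0 0))].
split=> [t|c]; first by rewrite !inE => /orP [] /eqP ->.
by rewrite !big_cons big_nil /= !scale1r addr0 DE Dodd_inner.
Qed.

Lemma jodd_inj a0 a1 a2 a3 b0 b1 b2 b3 :
  jodd a0 a1 a2 a3 = jodd b0 b1 b2 b3 -> [/\ a0 = b0, a1 = b1, a2 = b2 & a3 = b3].
Proof. by case. Qed.

Lemma odd_der_parametrization :
  exists Phi : J -> (J -> J),
    [/\ forall u, parJ true u -> odd_der (mulJ delta) (@parJ F Z) (Phi u),
        forall (c : F) u v, parJ true u -> parJ true v ->
          forall w, Phi (c *: u + v) w = c *: Phi u w + Phi v w,
        forall u v, parJ true u -> parJ true v -> (forall w, Phi u w = Phi v w) -> u = v &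
        forall D, odd_der (mulJ delta) (@parJ F Z) D ->
          exists2 u, parJ true u & forall w, D w = Phi u w].
Proof.
exists (fun u => Dodd (jo0 u) (jo1 u) (jo2 u) (jo3 u)); split.
- by move=> u _; apply: Dodd_sder.
- by move=> c [[[[? ?] ?] ?] [[[? ?] ?] ?]] [[[[? ?] ?] ?] [[[? ?] ?] ?]] _ _ w; rewrite DoddD.
- move=> u v pu pv E; rewrite (parJ_odd pu) (parJ_odd pv).
  move: (E jw1) (E jw2) (E jw3); rewrite !Dodd_jw1 !Dodd_jw2 !Dodd_jw3.
  by case/jodd_inj=> -> -> _ _ /jodd_inj [-> _ _ _] /jodd_inj [-> _ _ _].
- move=> D Dder; exists (jodd (jo1 (D jw1)) (jo0 (D jw1)) (jo0 (D jw2)) (jo0 (D jw3))) => //.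
  exact: odd_der_Dodd Dder.
Qed.

End Jordan.

Theorem corollary4p4 (F : fieldType) (Z : comAlgType F) (delta : Z -> Z)
  (char_neq2 : (2%:R : F) != 0)
  (delta_add : forall f g : Z, delta (f + g) = delta f + delta g)
  (delta_scale : forall (c : F) (f : Z), delta (c *: f) = c *: delta f)
  (delta_mul : forall f g : Z, delta (f * g) = delta f * g + f * delta g)
  (ZdeltaZ : forall z : Z, exists s : seq (Z * Z),
      z = \sum_(p <- s) p.1 * delta p.2) :
  (* (i) Der(J)_1 = Inder(J)_1 *)
  (forall D : JCK Z -> JCK Z,
     odd_der (mulJ delta) (@parJ F Z) D <->
     odd_inder (mulJ delta) (@parJ F Z) D)
  /\
  (* (ii) restriction Der(J)^{[0,0]} -> Der(K) is injective with image
     \overline{Der}(K) *)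
  ((forall D1 D2 : JCK Z -> JCK Z,
      der00 delta D1 -> der00 delta D2 ->
      (forall k, restrK D1 k = restrK D2 k) -> forall u, D1 u = D2 u)
   /\ (forall D : JCK Z -> JCK Z, der00 delta D -> derbarK delta (restrK D))
   /\ (forall d : KCK Z -> KCK Z, derbarK delta d ->
         exists D : JCK Z -> JCK Z,
           der00 delta D /\ forall k, restrK D k = d k))
  /\
  (* (iii) dim Der(J)_1 = dim J_1 (= 4 dim Z, J_1 being Z^4):
     an F-linear bijection J_1 -> Der(J)_1 *)
  (exists Phi : JCK Z -> (JCK Z -> JCK Z),
     [/\ (forall u, parJ true u -> odd_der (mulJ delta) (@parJ F Z) (Phi u)),
         (forall (c : F) u v, parJ true u -> parJ true v ->
            forall w, Phi (c *: u + v) w = c *: Phi u w + Phi v w),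
         (forall u v, parJ true u -> parJ true v ->
            (forall w, Phi u w = Phi v w) -> u = v) &
         (forall D, odd_der (mulJ delta) (@parJ F Z) D ->
            exists2 u, parJ true u & forall w, D w = Phi u w)]).
Proof.
split; first exact: odd_der_iff_inner.
split; last exact: odd_der_parametrization.
split; first exact: restrK_der00_inj.
split; first exact: restrK_der00_derbar.
exact: derbar_restrK.
Qed.
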